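(* Let ${\mathfrak h}$ be an $n$-dimensional complex Hilbert space, $L:{\mathfrak h}\to{\mathfrak h}$ symmetric, $w\in{\mathfrak h}$, $\theta\in\mathbb R$, with $\{L^kw\}_{k=0}^{n-1}$ a basis of ${\mathfrak h}$, and let $p$ be the polynomial defined in the context. Then $$p(z)=(\theta z+1)\det(z^2-L)-z\sum_{j=1}^n\Big(\sum_{k=1}^ja_{j-k}\langle w,L^{k-1}w\rangle\Big)z^{2(n-j)},$$ where $a_0=1$ and $a_j:=(-1)^j\sum_{i_1<\dots<i_j}\lambda_{i_1}\cdots\lambda_{i_j}$ for $1\le j\le n$.
   Context: Under the basis assumption $L$ has $n$ distinct eigenvalues $\lambda_1,\dots,\lambda_n$; $V$ denotes the Vandermonde matrix $V_{ki}=\lambda_i^{k-1}$ ($1\le k,i\le n$). Define $p_1(z)=\theta z+1$, $p_k(z)=z^2p_{k-1}(z)-\langle w,L^{k-2}w\rangle z$ for $k\ge2$, and $p(z):=p_{n+1}(z)-\sum_{i,j=1}^n\lambda_i^n(V^{-1})_{ij}\,p_j(z)$. *)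

From HB Require Import structures.
From mathcomp Require Import all_boot all_order all_algebra.
Set Implicit Arguments. Unset Strict Implicit. Unset Printing Implicit Defensive.
Import Order.TTheory GRing.Theory Num.Theory.
Local Open Scope ring_scope.

Definition ip (C : numClosedFieldType) (n : nat) (u v : 'cV[C]_n) : C :=
  \sum_(i < n) (u i 0)^* * v i 0.

Definition selfadjoint_mx (C : numClosedFieldType) (n : nat) (L : 'M[C]_n) : Prop :=
  map_mx Num.conj L^T = L.

Definition krylov (C : numClosedFieldType) (n : nat) (L : 'M[C]_n) (w : 'cV[C]_n)
  : 'M[C]_n := \matrix_(i < n, k < n) (L ^+ k *m w) i 0.

(* pp θ L w m = p_{m+1} of the paper:
   p_1 = θ z + 1,  p_k = z^2 p_{k-1} - <w, L^{k-2} w> z. *)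
Fixpoint pp (C : numClosedFieldType) (n : nat) (theta : C) (L : 'M[C]_n)
  (w : 'cV[C]_n) (m : nat) : {poly C} :=
  match m with
  | 0 => theta *: 'X + 1
  | m'.+1 => 'X^2 * pp theta L w m' - ip w (L ^+ m' *m w) *: 'X
  end.

(* p(z) = p_{n+1}(z) - sum_{i,j} lambda_i^n (V^{-1})_{ij} p_j(z),
   V_{ki} = lambda_i^{k-1} (the mathcomp Vandermonde matrix, 0-indexed). *)
Definition pfull (C : numClosedFieldType) (n : nat) (theta : C) (L : 'M[C]_n)
  (w : 'cV[C]_n) (lambda : 'I_n -> C) : {poly C} :=
  let V := Vandermonde n (\row_(i < n) lambda i) in
  pp theta L w n -
  \sum_(i < n) \sum_(j < n) (lambda i ^+ n * invmx V i j) *: pp theta L w j.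

Definition acoef (C : numClosedFieldType) (n : nat) (lambda : 'I_n -> C) (j : nat) : C :=
  (-1) ^+ j * \sum_(I : {set 'I_n} | #|I| == j) \prod_(i in I) lambda i.

From HB Require Import structures.
From mathcomp Require Import all_boot all_order all_algebra.
From mathcomp Require Import zify ring.
Set Implicit Arguments. Unset Strict Implicit. Unset Printing Implicit Defensive.
Import Order.TTheory GRing.Theory Num.Theory.
Local Open Scope ring_scope.

(* Since the monic polynomial q = prod_i (X - lambda_i) = det (X - L) vanishes
   at every lambda_i, the row (lambda_i^n)_i equals (-q_j)_j times the
   Vandermonde matrix, so p = sum_(j <= n) q_j p_(j+1).  Unrolling the recursion,
   p_(j+1)(z) = z^(2j) (theta z + 1) - z sum_(k < j) <w, L^k w> z^(2(j-1-k)):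
   the first terms add up to (theta z + 1) q(z^2), and since q_j = a_(n-j) the
   remaining double sum is a Cauchy product of (a_j), (<w, L^k w>) and (z^(2m))
   read in a different order. *)

Section ProdXsubCOrd.
Variables (R : comNzRingType) (n : nat) (lambda : 'I_n -> R).
Local Notation rs := [seq lambda i | i <- enum 'I_n].
Local Notation q := (\prod_(i < n) ('X - (lambda i)%:P)).

Lemma prod_XsubC_ord_seq : q = \prod_(x <- rs) ('X - x%:P).
Proof. by rewrite big_map big_enum. Qed.

Lemma size_map_enum_ord : size rs = n.
Proof. by rewrite size_map size_enum_ord. Qed.

Lemma size_prod_XsubC_ord : size q = n.+1.
Proof. by rewrite prod_XsubC_ord_seq size_prod_XsubC size_map_enum_ord. Qed.

Lemma coef_prod_XsubC_ord_top : q`_n = 1.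
Proof.
have /monicP := monic_prod_XsubC (index_enum 'I_n) xpredT lambda.
by rewrite lead_coefE size_prod_XsubC_ord.
Qed.

Lemma root_prod_XsubC_ord i : q.[lambda i] = 0.
Proof. by rewrite horner_prod (bigD1 i) //= hornerXsubC subrr mul0r. Qed.

Lemma coef_prod_XsubC_ord k : (k <= n)%N ->
  q`_k = (-1) ^+ (n - k) * \sum_(I : {set 'I_n} | #|I| == (n - k)%N) \prod_(i in I) lambda i.
Proof.
move=> le_kn; rewrite prod_XsubC_ord_seq coef_prod_XsubC size_map_enum_ord //.
congr (_ * _); apply: eq_bigr => I _; apply: eq_bigr => i _.
by rewrite (nth_map i) ?size_enum_ord // nth_ord_enum.
Qed.
End ProdXsubCOrd.

Lemma Vandermonde_unitmx (F : fieldType) n (lambda : 'I_n -> F) :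
  injective lambda -> Vandermonde n (\row_(i < n) lambda i) \in unitmx.
Proof.
move=> inj_lambda; rewrite unitmxE det_Vandermonde unitfE.
apply/prodf_neq0 => i _; apply/prodf_neq0 => k lt_ik.
by rewrite !mxE subr_eq0; apply: contraTneq lt_ik => /inj_lambda ->; rewrite ltnn.
Qed.

Lemma sum_expn_mul_invmx_Vandermonde (F : fieldType) n (lambda : 'I_n -> F) j :
  injective lambda ->
  \sum_(i < n) lambda i ^+ n * invmx (Vandermonde n (\row_(i < n) lambda i)) i j =
  - (\prod_(i < n) ('X - (lambda i)%:P))`_j.
Proof.
move=> inj_lambda; set V := Vandermonde n _; set q := \prod_(i < n) _.
have powV : \row_(i < n) lambda i ^+ n = \row_(k < n) - q`_k *m V.
  apply/rowP => i; rewrite !mxE.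
  have := root_prod_XsubC_ord lambda i.
  rewrite horner_coef size_prod_XsubC_ord big_ord_recr /= coef_prod_XsubC_ord_top mul1r.
  move/eqP; rewrite addrC addr_eq0 => /eqP ->; rewrite -sumrN.
  by apply: eq_bigr => k _; rewrite !mxE mulNr.
have := congr1 (fun M => (M *m invmx V) 0 j) powV.
rewrite /= mulmxK ?Vandermonde_unitmx // !mxE => <-.
by apply: eq_bigr => i _; rewrite !mxE.
Qed.

Lemma horner_char_poly (R : comNzRingType) n (A : 'M[R]_n) x :
  (char_poly A).[x] = \det (x%:M - A).
Proof.
rewrite -horner_evalE -det_map_mx; congr (\det _); apply/matrixP => i j.
by rewrite !mxE rmorphB rmorphMn /= !horner_evalE hornerX (hornerC (A i j)).
Qed.

Lemma char_poly_eigenvalues (F : fieldType) n (A : 'M[F]_n) (lambda : 'I_n -> F) :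
  injective lambda -> (forall i, eigenvalue A (lambda i)) ->
  char_poly A = \prod_(i < n) ('X - (lambda i)%:P).
Proof.
move=> inj_lambda eig; rewrite prod_XsubC_ord_seq.
have := all_roots_prod_XsubC (p := char_poly A) (rs := [seq lambda i | i <- enum 'I_n]).
rewrite size_map_enum_ord size_char_poly (monicP (char_poly_monic A)) scale1r; apply=> //.
- by apply/allP => _ /mapP[i _ ->]; rewrite -eigenvalue_root_char.
- by rewrite uniq_rootsE map_inj_uniq ?enum_uniq.
Qed.

Lemma horner_pp (C : numClosedFieldType) n theta (L : 'M[C]_n) w m z :
  (pp theta L w m).[z] = z ^+ (2 * m) * (theta * z + 1) -
    z * \sum_(k < m) ip w (L ^+ k *m w) * z ^+ (2 * (m - k.+1)).
Proof.
elim: m => [|m IHm] /=.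
  by rewrite big_ord0 mulr0 subr0 mul1r hornerD hornerZ hornerX hornerC.
rewrite hornerD hornerN hornerZ hornerX hornerM hornerXn IHm big_ord_recr /=.
rewrite subnn muln0 mulr1.
have -> : \sum_(k < m) ip w (L ^+ k *m w) * z ^+ (2 * (m.+1 - k.+1)) =
          z ^+ 2 * \sum_(k < m) ip w (L ^+ k *m w) * z ^+ (2 * (m - k.+1)).
  rewrite mulr_sumr; apply: eq_bigr => k _; rewrite mulrCA -exprD.
  by congr (_ * _ ^+ _); have := ltn_ord k; lia.
by rewrite mulnS exprD; ring.
Qed.

(* Both sides are the coefficient of ['X^N] in the product of the three
   generating polynomials of [a], [c] and [e]. *)
Lemma cauchy_product_rotate (R : comNzRingType) N (a c e : nat -> R) :
  \sum_(i < N.+1) a (N - i)%N * \sum_(j < i.+1) c j * e (i - j)%N =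
  \sum_(i < N.+1) (\sum_(j < i.+1) a (i - j)%N * c j) * e (N - i)%N.
Proof.
pose P f := \poly_(i < N.+1) f i : {poly R}.
have coefP f i : (i <= N)%N -> (P f)`_i = f i by rewrite coef_poly ltnS => ->.
have coefPM f g i : (i <= N)%N -> (P f * P g)`_i = \sum_(j < i.+1) f j * g (i - j)%N.
  move=> le_iN; rewrite coefM; apply: eq_bigr => j _.
  by rewrite !coefP //; have := ltn_ord j; lia.
transitivity ((P c * P e * P a)`_N).
  rewrite coefM; apply: eq_bigr => i _.
  by rewrite coefP ?leq_subr // (coefPM _ _ _ (leq_ord i)) mulrC.
rewrite mulrAC coefM; apply: eq_bigr => i _.
rewrite coefP ?leq_subr // (coefPM _ _ _ (leq_ord i)); congr (_ * _).
by apply: eq_bigr => j _; rewrite mulrC.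
Qed.

Lemma sum_shifted_cauchy_product (R : comNzRingType) n (a c e : nat -> R) :
  \sum_(j < n.+1) a (n - j)%N * \sum_(k < j) c k * e (j - k.+1)%N =
  \sum_(1 <= j < n.+1) (\sum_(1 <= k < j.+1) a (j - k)%N * c (k - 1)%N) * e (n - j)%N.
Proof.
case: n => [|N]; first by rewrite big_ord1 big_ord0 mulr0 big_geq.
rewrite big_ord_recl big_ord0 mulr0 add0r big_add1 big_mkord.
rewrite cauchy_product_rotate; apply: eq_bigr => j _; rewrite big_add1 big_mkord.
congr (_ * _); by apply: eq_bigr => k _; rewrite subn1.
Qed.

Lemma horner_pfull (C : numClosedFieldType) n theta (L : 'M[C]_n) w
    (lambda : 'I_n -> C) z :
  injective lambda ->
  (pfull theta L w lambda).[z] =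
  \sum_(j < n.+1) (\prod_(i < n) ('X - (lambda i)%:P))`_j * (pp theta L w j).[z].
Proof.
move=> inj_lambda; rewrite /pfull hornerD hornerN horner_sum.
under eq_bigr => i _ do rewrite horner_sum.
rewrite exchange_big big_ord_recr /= coef_prod_XsubC_ord_top mul1r addrC -sumrN.
congr (_ + _); apply: eq_bigr => j _.
under eq_bigr => i _ do rewrite hornerZ.
by rewrite -mulr_suml sum_expn_mul_invmx_Vandermonde // mulNr opprK.
Qed.

Theorem lemma5p2 (C : numClosedFieldType) (n : nat) (L : 'M[C]_n)
  (w : 'cV[C]_n) (theta : C) (lambda : 'I_n -> C) :
  selfadjoint_mx L ->
  theta \is Num.real ->
  krylov L w \in unitmx ->
  injective lambda ->
  (forall i, eigenvalue L (lambda i)) ->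
  forall z : C,
    (pfull theta L w lambda).[z] =
    (theta * z + 1) * \det ((z ^+ 2)%:M - L) -
    z * \sum_(1 <= j < n.+1)
          (\sum_(1 <= k < j.+1) acoef lambda (j - k) * ip w (L ^+ (k - 1) *m w))
          * z ^+ (2 * (n - j)).
Proof.
move=> _ _ _ inj_lambda eig z.
set q := \prod_(i < n) ('X - (lambda i)%:P).
have coef_q (j : 'I_n.+1) : q`_j = acoef lambda (n - j).
  exact: coef_prod_XsubC_ord (leq_ord j).
have q_z2 : q.[z ^+ 2] = \sum_(j < n.+1) q`_j * z ^+ (2 * j).
  by rewrite horner_coef size_prod_XsubC_ord; under [RHS]eq_bigr do rewrite exprM.
rewrite horner_pfull // -horner_char_poly (char_poly_eigenvalues inj_lambda eig) q_z2.
rewrite -(sum_shifted_cauchy_product n (acoef lambda) (fun k => ip w (L ^+ k *m w))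
                                      (fun m => z ^+ (2 * m))) /=.
rewrite !mulr_sumr -sumrB; apply: eq_bigr => j _.
by rewrite horner_pp coef_q; ring.
Qed.
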